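(* Let $q$ be a prime power, $n\ge1$, $d\in\mathbb F_q$, and $P=\sum_{s\ge0}a_s\theta^s\in\mathbb F_q[\theta]$ nonzero; put $P_2(\theta)=P(\theta+d)$. For a polynomial $R=\sum_s b_s\theta^s$ let $\mathfrak M(R,n,T)$ be the infinite matrix with rows and columns indexed by $i,j\in\{0,1,2,\dots\}$ and entries $$\mathfrak M(R,n,T)_{ij}=\sum_{l=0}^nT^{n-l}(-1)^l\binom nl b_{(i+1)q-(j+1)-l},$$ where $b_s=0$ for $s<0$ or $s>\deg R$. Let $W$ be the infinite upper triangular matrix with $W_{ij}=\binom ji d^{j-i}$ for $j\ge i$ and $W_{ij}=0$ for $j<i$ (with $d^0=1$). Then $W$ is invertible, all products below involve only finite sums, and $$\mathfrak M(P_2,n,T-d)=W\,\mathfrak M(P,n,T)\,W^{-1},$$ where $\mathfrak M(P_2,n,T-d)$ denotes $\mathfrak M(P_2,n,T)$ with $T$ replaced by $T-d$.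
   Context: Binomial coefficients are read in $\mathbb F_q$. The inverse of $W$ is the matrix of the same form with $d$ replaced by $-d$. *)

From HB Require Import structures.
From mathcomp Require Import all_boot all_order all_algebra all_field.
Set Implicit Arguments. Unset Strict Implicit. Unset Printing Implicit Defensive.
Import GRing.Theory.
Local Open Scope ring_scope.

Definition infmx (R : Type) := nat -> nat -> R.

(* b_s of R, with b_s = 0 for s < 0 (s given as a - c with a c : nat). *)
Definition coef_sub (F : fieldType) (R : {poly F}) (a c : nat) : F :=
  if (c <= a)%N then R`_(a - c) else 0.

Definition frakM (F : finFieldType) (R : {poly F}) (n : nat) : infmx {poly F} :=
  fun i j => \sum_(l < n.+1)
    'X ^+ (n - l) * ((-1) ^+ l * ('C(n, l))%:R * coef_sub R (i.+1 * #|F|) (j.+1 + l))%:P.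

Definition Wmx (F : fieldType) (d : F) : infmx {poly F} :=
  fun i j => if (i <= j)%N then ((('C(j, i))%:R * d ^+ (j - i)) : F)%:P else 0.

Definition idmx_inf (F : fieldType) : infmx {poly F} := fun i j => (i == j)%:R.

Definition prod_finite (F : fieldType) (A B : infmx {poly F}) : Prop :=
  forall i k, exists N, forall j, (N <= j)%N -> A i j * B j k = 0.

(* C is the product A B (the sums being finite, they stabilize). *)
Definition is_prod (F : fieldType) (A B C : infmx {poly F}) : Prop :=
  forall i k, exists N, forall N', (N <= N')%N -> C i k = \sum_(j < N') A i j * B j k.

Definition map_infmx (R S : Type) (f : R -> S) (A : infmx R) : infmx S :=
  fun i j => f (A i j).

(* Read a polynomial in [theta] with coefficients in [F[T]] as an element of
   [{poly {poly F}}] (outer variable [theta], inner variable [T]).  The entry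
   [M(R,n,T)_ij] is the coefficient of [theta^((i+1)q-1)] in
   [(T - theta)^n R(theta) theta^j], and [W_im] is the coefficient of [theta^i]
   in [(theta + d)^m].  Since [(theta + d)^q = theta^q + d], the coefficients of
   index [iq + q - 1] of [g(theta + d)] are obtained from those of [g] by
   applying [W]; hence [W M] is the matrix of these coefficients for
   [(T - d - theta)^n P2(theta) (theta + d)^j].  Column [k] of [W^-1] lists the
   coefficients of [(theta - d)^k], and [(theta - d)^k] composed with
   [theta + d] is [theta^k], so multiplying on the right by [W^-1] turns
   [(theta + d)^j] into [theta^k], which gives [M(P2, n, T - d)].  All sums are
   finite because [W] is upper triangular and the columns of [M] have finite
   support. *)

From HB Require Import structures.
From mathcomp Require Import all_boot all_order all_algebra all_field.
From mathcomp Require Import all_fingroup all_solvable.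
From mathcomp Require Import zify.
Set Implicit Arguments.
Unset Strict Implicit.
Unset Printing Implicit Defensive.
Import GRing.Theory.
Local Open Scope ring_scope.

Lemma sum_ord_widen (R : nmodType) (f : nat -> R) N N' : (N <= N')%N ->
  (forall m, (N <= m)%N -> f m = 0) -> \sum_(m < N') f m = \sum_(m < N) f m.
Proof.
move=> le_N f0; rewrite [RHS](big_ord_widen N' f le_N) [RHS]big_mkcond.
by apply: eq_bigr => m _; case: ltnP => // /f0 ->.
Qed.

Lemma sum_ord_single (R : nmodType) (f : nat -> R) i n :
  (forall j, j != i -> f j = 0) -> \sum_(j < n) f j = if (i < n)%N then f i else 0.
Proof.
move=> f0; rewrite (bigID (fun j : 'I_n => j == i :> nat)) /= [X in _ + X]big1 ?addr0.
  exact: big_ord1_eq.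
by move=> j /f0.
Qed.

Section InfiniteMatrixProduct.

Variable F : fieldType.
Implicit Types A B C : infmx {poly F}.

Lemma prod_finite_col_support A B (N : nat -> nat) :
  (forall j k, (N k <= j)%N -> B j k = 0) -> prod_finite A B.
Proof. by move=> B0 i k; exists (N k) => j /B0 ->; rewrite mulr0. Qed.

Lemma is_prod_col_support A B C (N : nat -> nat) :
  (forall j k, (N k <= j)%N -> B j k = 0) ->
  (forall i k, C i k = \sum_(j < N k) A i j * B j k) -> is_prod A B C.
Proof.
move=> B0 C_def i k; exists (N k) => N' le_N; rewrite C_def; symmetry.
by apply: (sum_ord_widen (f := fun j => A i j * B j k) le_N) => j /B0 ->; rewrite mulr0.
Qed.

End InfiniteMatrixProduct.

Lemma comp_poly_wide (R : comNzRingType) (p r : {poly R}) N : (size p <= N)%N ->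
  p \Po r = \sum_(j < N) p`_j *: r ^+ j.
Proof.
move=> le_pN; rewrite /comp_poly (horner_coef_wide _ (_ : size p^:P <= N)%N).
  by apply: eq_bigr => j _; rewrite coef_map /= mul_polyC.
by rewrite size_map_polyC.
Qed.

Lemma coef_XaddC_exp (R : comNzRingType) (c : R) j i :
  (('X + c%:P) ^+ j)`_i = if (i <= j)%N then 'C(j, i)%:R * c ^+ (j - i) else 0.
Proof.
rewrite addrC exprDn.
under eq_bigr => k _ do rewrite -polyC_exp mul_polyC scalerMnl.
rewrite coef_sumMXn /= (big_ord1_eq _ (fun k => c ^+ (j - k) *+ 'C(j, k))) ltnS.
by case: leqP => // _; rewrite -mulr_natl.
Qed.

Lemma size_XaddC_exp (R : comNzRingType) (c : R) k : (size (('X + c%:P) ^+ k) <= k.+1)%N.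
Proof. by apply/leq_sizeP => l lt_kl; rewrite coef_XaddC_exp ifN // -ltnNge. Qed.

Lemma comp_XaddC_oppC_exp (R : comNzRingType) (c : R) k :
  ('X + (- c)%:P) ^+ k \Po ('X + c%:P) = 'X^k.
Proof. by rewrite rmorphXn /= comp_polyD comp_polyX comp_polyC polyCN addrK. Qed.

Lemma CsubX_exp (R : comNzRingType) (u : R) n :
  (u%:P - 'X) ^+ n = \sum_(l < n.+1) (u ^+ (n - l) * (-1) ^+ l *+ 'C(n, l)) *: 'X^l.
Proof.
rewrite exprDn; apply: eq_bigr => l _.
by rewrite -scalerMnl -mul_polyC polyCM !polyC_exp rmorphN1 -mulrA -exprMn mulN1r.
Qed.

Lemma size_CsubX_exp_map (A : comNzRingType) (u p : {poly A}) n j :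
  (size ((u%:P - 'X) ^+ n * p^:P * 'X^j)%R <= size p + n + j)%N.
Proof.
have size_CsubX : size (u%:P - 'X) = 2 by rewrite -opprB size_polyN size_XsubC.
have := size_poly_exp_leq (u%:P - 'X) n; rewrite size_CsubX mul1n => le_En.
have := size_polyMleq ((u%:P - 'X) ^+ n) p^:P; rewrite size_map_polyC => le_EP.
have := size_polyMleq ((u%:P - 'X) ^+ n * p^:P) 'X^j; rewrite size_polyXn.
lia.
Qed.

Lemma Wmx_coef (F : fieldType) (d : F) i m :
  Wmx d i m = (('X + (d%:P)%:P : {poly {poly F}}) ^+ m)`_i.
Proof.
rewrite coef_XaddC_exp /Wmx; case: leqP => // _.
by rewrite rmorphM rmorphXn rmorph_nat.
Qed.

Lemma Wmx_eq0 (F : fieldType) (d : F) i j : (j < i)%N -> Wmx d i j = 0.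
Proof. by move=> lt_ji; rewrite /Wmx leqNgt lt_ji. Qed.

Lemma Wmx_mulV (F : fieldType) (d : F) i k N : (k < N)%N ->
  \sum_(j < N) Wmx d i j * Wmx (- d) j k = (i == k)%:R.
Proof.
move=> lt_kN; rewrite -[RHS](coefXn {poly F} k i).
rewrite -(comp_XaddC_oppC_exp (d%:P)) -polyCN.
rewrite (comp_poly_wide _ (leq_trans (size_XaddC_exp _ k) lt_kN)) coef_sum.
by apply: eq_bigr => j _; rewrite coefZ mulrC !Wmx_coef.
Qed.

Section Cartier.

Variable F : finFieldType.
Local Notation q := #|F|.

Definition cartier (g : {poly {poly F}}) i := g`_(i * q + q.-1).

Lemma exprD_card (x y : {poly {poly F}}) : (x + y) ^+ q = x ^+ q + y ^+ q.
Proof.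
have [p _ pF] := finPcharP F.
have pq : p.-nat q.
  by have := abelem_pgroup (fin_ring_pchar_abelem pF); rewrite /pgroup cardsT.
apply: exprDn_pchar; rewrite (eq_pnat _ (_ : _ =i (p : nat_pred))) // => r.
by rewrite !pchar_poly (pcharf_eq pF).
Qed.

Lemma XaddC_exp_card (d : F) :
  ('X + (d%:P)%:P : {poly {poly F}}) ^+ q = 'X^q + (d%:P)%:P.
Proof. by rewrite exprD_card -!polyC_exp expf_card. Qed.

Lemma cartier_XaddC_exp (d : F) s i :
  cartier (('X + (d%:P)%:P) ^+ s) i =
  if (s %% q == q.-1)%N then Wmx d i (s %/ q)%N else 0.
Proof.
have q_gt1 : (1 < q)%N := finNzRing_gt1 F.
set Y := ('X + (d%:P)%:P : {poly {poly F}}).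
(* [(theta + d)^(aq + r) = (theta^q + d)^a (theta + d)^r] with [r < q]. *)
rewrite /cartier {1}(divn_eq s q) exprD mulnC exprM XaddC_exp_card.
set a := (s %/ q)%N; set r := (s %% q)%N.
have -> : ('X^q + (d%:P)%:P) ^+ a = Y ^+ a \Po 'X^q.
  by rewrite rmorphXn /= comp_polyD comp_polyX comp_polyC.
rewrite mulrC coefM (@sum_ord_single _
  (fun j => (Y ^+ r)`_j * (Y ^+ a \Po 'X^q)`_(i * q + q.-1 - j)) q.-1) => [|j ne_j].
  rewrite (_ : q.-1 < _)%N; last by lia.
  rewrite coef_comp_poly_Xn; last by lia.
  rewrite (_ : i * q + q.-1 - q.-1 = i * q)%N; last by lia.
  rewrite dvdn_mull // mulnK; last by lia.
  rewrite coef_XaddC_exp Wmx_coef.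
  have [->|ne_r] := eqVneq r q.-1; first by rewrite leqnn binn subnn mulr1 mul1r.
  by rewrite (_ : q.-1 <= r = false)%N ?mul0r //; lia.
rewrite coef_XaddC_exp; case: (leqP j r) => le_jr; last by rewrite mul0r.
rewrite coef_comp_poly_Xn; last by lia.
rewrite (_ : i * q + q.-1 - j = q.-1 - j + i * q)%N; last by lia.
rewrite dvdn_addl ?dvdn_mull // ifN ?mulr0 //.
by apply/negP => /dvdn_leq; move/eqP: ne_j; lia.
Qed.

Lemma cartier_comp_XaddC (d : F) (g : {poly {poly F}}) B i : (size g <= B * q)%N ->
  \sum_(m < B) Wmx d i m * cartier g m = cartier (g \Po ('X + (d%:P)%:P)) i.
Proof.
move=> le_gB; have q_gt1 : (1 < q)%N := finNzRing_gt1 F.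
have lt_q1q : (q.-1 < q)%N by lia.
pose c s := g`_s * (if (s %% q == q.-1)%N then Wmx d i (s %/ q)%N else 0).
rewrite (comp_poly_wide _ le_gB) /cartier coef_sum.
under [RHS]eq_bigr do rewrite coefZ -/(cartier _ i) cartier_XaddC_exp -/(c _).
rewrite -(big_mkord xpredT (fun m => Wmx d i m * g`_(m * q + q.-1))).
rewrite -(big_mkord xpredT c) big_nat_mul; apply: eq_big_nat => m _.
rewrite (_ : m.+1 * q = (m * q + q.-1).+1)%N; last by rewrite mulSn; lia.
rewrite big_nat_recr ?leq_addr //= big_nat_cond big1 ?add0r => [|s].
  rewrite /c modnMDl (modn_small lt_q1q) eqxx.
  by rewrite divnMDl ?(ltnW q_gt1) // (divn_small lt_q1q) addn0 mulrC.
rewrite andbT => /andP[le_ms lt_s]; rewrite /c ifN ?mulr0 //.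
rewrite -(subnKC le_ms) modnMDl modn_small; last by lia.
by rewrite neq_ltn ltn_subLR // lt_s.
Qed.

Lemma frakM_comp (R : {poly F}) n i j (u : {poly F}) :
  frakM R n i j \Po u = cartier ((u%:P - 'X) ^+ n * R^:P * 'X^j) i.
Proof.
rewrite /frakM /cartier CsubX_exp !mulr_suml coef_sum raddf_sum.
apply: eq_bigr => l _ /=.
rewrite comp_polyM comp_Xn_poly comp_polyC -!scalerAl coefZ coefMXn coefXnM coef_map /=.
(* [set] merges the differently elaborated copies of [#|F|] into one atom for [lia]. *)
move: (finNzRing_gt1 F); set k := #|F| => k_gt1.
rewrite /coef_sub; case: (leqP (j.+1 + l) (i.+1 * k)) => [le_jlk|lt_kjl].
  rewrite !ifN; try by move: le_jlk; rewrite mulSn; lia.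
  rewrite (_ : i * k + k.-1 - j - l = i.+1 * k - (j.+1 + l))%N; last by rewrite mulSn; lia.
  by rewrite !polyCM rmorphXn rmorphN1 rmorph_nat -[in RHS]mulr_natr !mulrA.
rewrite mulr0 polyC0 mulr0; case: ifP => [_|/negbT le_jik]; first by rewrite mulr0.
by rewrite ifT ?mulr0 //; move: lt_kjl; rewrite mulSn; lia.
Qed.

Lemma frakM_eq0 (R : {poly F}) n m j : (size R + n + j < m)%N -> frakM R n m j = 0.
Proof.
move=> lt_m; rewrite -[frakM _ _ _ _]comp_polyXr frakM_comp /cartier nth_default //.
apply: leq_trans (size_CsubX_exp_map 'X R n j) _.
move: lt_m (finNzRing_gt1 F); set k := #|F|; set s := size R => lt_m k_gt1.
have : (m <= m * k)%N by rewrite leq_pmulr // ltnW.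
lia.
Qed.

Lemma Wmx_frakM (d : F) (P : {poly F}) n i j B : (size P + n + j < B)%N ->
  \sum_(m < B) Wmx d i m * frakM P n m j =
  cartier ((('X - d%:P)%:P - 'X) ^+ n * (P \Po ('X + d%:P))^:P * ('X + (d%:P)%:P) ^+ j) i.
Proof.
move=> lt_jB.
under eq_bigr do rewrite -[frakM _ _ _ _]comp_polyXr frakM_comp.
rewrite cartier_comp_XaddC; last first.
  apply: leq_trans (size_CsubX_exp_map _ _ _ _) (leq_trans (ltnW lt_jB) _).
  by rewrite leq_pmulr // ltnW // finNzRing_gt1.
rewrite !comp_polyM comp_Xn_poly rmorphXn /= comp_polyB comp_polyC comp_polyX.
by rewrite map_comp_poly map_polyXaddC /= polyCB opprD addrCA [- 'X + _]addrC.
Qed.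

Lemma sum_cartier_mul_Wmx (d : F) (h : {poly {poly F}}) i k :
  \sum_(j < k.+1) cartier (h * ('X + (d%:P)%:P) ^+ j) i * Wmx (- d) j k =
  cartier (h * 'X^k) i.
Proof.
rewrite -(comp_XaddC_oppC_exp (d%:P)) -polyCN.
rewrite (comp_poly_wide _ (size_XaddC_exp _ k)) mulr_sumr /cartier coef_sum.
by apply: eq_bigr => j _; rewrite -scalerAr coefZ mulrC Wmx_coef.
Qed.

End Cartier.

Theorem proposition5p1p2 (F : finFieldType) (n : nat) (d : F) (P : {poly F}) :
  (0 < n)%N -> P != 0 ->
  let P2 := P \Po ('X + d%:P) in
  let W := Wmx d in
  let Winv := Wmx (- d) in
  let M := frakM P n in
  let M2 := map_infmx (fun p => p \Po ('X - d%:P)) (frakM P2 n) in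
  (prod_finite W Winv /\ is_prod W Winv (@idmx_inf F) /\
   prod_finite Winv W /\ is_prod Winv W (@idmx_inf F)) /\
  (prod_finite W M /\
   exists WM, is_prod W M WM /\ prod_finite WM Winv /\ is_prod WM Winv M2).
Proof.
move=> _ _ P2 W Winv M M2.
pose N k := (size P + n + k).+1.
have M0 j k : (N k <= j)%N -> M j k = 0 by exact: frakM_eq0.
split.
  split; first exact: prod_finite_col_support (Wmx_eq0 _).
  split; first by apply: is_prod_col_support (Wmx_eq0 _) _ => i k; rewrite Wmx_mulV.
  split; first exact: prod_finite_col_support (Wmx_eq0 _).
  apply: is_prod_col_support (Wmx_eq0 _) _ => i k.
  by rewrite /Winv -{2}(opprK d) Wmx_mulV.
split; first exact: prod_finite_col_support M0.
exists (fun i k => \sum_(m < N k) W i m * M m k).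
split; first exact: is_prod_col_support M0 _.
split; first exact: prod_finite_col_support (Wmx_eq0 _).
apply: is_prod_col_support (Wmx_eq0 _) _ => i k.
rewrite /M2 /map_infmx /Winv frakM_comp -(sum_cartier_mul_Wmx d).
by apply: eq_bigr => j _; rewrite Wmx_frakM.
Qed.
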